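(* Let $n\ge1$, $p\in\,]1,2[$, $k_3>0$, and define $\phi_1,\phi_2:\mathbb{R}^n\to\mathbb{R}^n$ by $$\phi_1(e_1)=k_3e_1+(e_1^\top e_1)^{\frac{1-p}{3p-2}}e_1,$$ $$\phi_2(e_1)=k_3^2e_1+\frac{2k_3(2p-1)}{3p-2}(e_1^\top e_1)^{\frac{1-p}{3p-2}}e_1+\frac{p}{3p-2}(e_1^\top e_1)^{\frac{2(1-p)}{3p-2}}e_1.$$ Let $k_1,k_2>0$ be such that $\mathcal{A}^*=\begin{bmatrix}-k_1&1\\-k_2&0\end{bmatrix}$ is Hurwitz, let $\mathcal{Q}^*\in\mathbb{R}^{2\times2}$ be symmetric positive definite, and let $\mathcal{P}^*\succ0$ be the unique solution of $(\mathcal{A}^* )^\top\mathcal{P}^*+\mathcal{P}^*\mathcal{A}^*=-\mathcal{Q}^*$. Set $\gamma_1=k_3\lambda_{\min}\{\mathcal{Q}^*\}/\lambda_{\max}\{\mathcal{P}^*\}$. Consider the perturbed system $$\dot e_1=-k_1\phi_1(e_1)+e_2+\delta_1,\qquad \dot e_2=-k_2\phi_2(e_1)+\delta_2,$$ where $\delta=(\delta_1^\top,\delta_2^\top)^\top$, $\delta_1,\delta_2\in\mathbb{R}^n$, is a perturbation bounded by $\|\delta\|\le\bar\delta$. If $\gamma_1\ge\lambda_{\max}\{\mathcal{P}^*\}/\lambda_{\min}\{\mathcal{P}^*\}$, then this perturbed system is practically finite-time stable at the origin.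
   Context: $\lambda_{\min}(\cdot),\lambda_{\max}(\cdot)$ denote the minimum and maximum eigenvalues of a symmetric matrix. A system is practically finite-time stable (PFTS) at the origin if its solutions converge in finite time to a bounded neighbourhood of the origin; specifically, this is certified by a positive definite $V$ with $\dot V\le-\lambda_1V-\lambda_2V^\alpha+\eta$ ($\lambda_1,\lambda_2,\eta>0$, $\alpha\in]0,1[$), in which case solutions reach in finite time the set $\{V\le\min\{\frac{\eta}{(1-\theta_0)\lambda_1},(\frac{\eta}{(1-\theta_0)\lambda_2})^{1/\alpha}\}\}$ for any $\theta_0\in]0,1[$. *)

From HB Require Import structures.
From mathcomp Require Import all_boot all_order all_algebra.
From mathcomp Require Import all_classical all_reals all_analysis.
From mathcomp Require Import complex.
Set Implicit Arguments. Unset Strict Implicit. Unset Printing Implicit Defensive.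
Import Order.TTheory GRing.Theory Num.Theory.
Import numFieldNormedType.Exports.
Local Open Scope complex_scope.
Local Open Scope classical_set_scope.
Local Open Scope ring_scope.
Local Open Scope complex_scope.

Definition sqnorm (R : realType) (n : nat) (x : 'rV[R]_n) : R :=
  \sum_(i < n) x ord0 i ^+ 2.

Definition pnorm2 (R : realType) (n : nat) (x1 x2 : 'rV[R]_n) : R :=
  Num.sqrt (sqnorm x1 + sqnorm x2).

Definition posdef (R : realType) (m : nat) (M : 'M[R]_m) : Prop :=
  M^T = M /\ forall x : 'rV[R]_m, x != 0 -> 0 < (x *m M *m x^T) ord0 ord0.

Definition hurwitz (R : realType) (m : nat) (A : 'M[R]_m) : Prop :=
  forall z : R[i], root (map_poly (fun a : R => a%:C) (char_poly A)) z ->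
    complex.Re z < 0.

(* extreme eigenvalues (of a symmetric matrix, whose eigenvalues are real) *)
Definition lambda_max (R : realType) (m : nat) (M : 'M[R]_m) : R :=
  sup [set a : R | eigenvalue M a].
Definition lambda_min (R : realType) (m : nat) (M : 'M[R]_m) : R :=
  inf [set a : R | eigenvalue M a].

(* the nonlinear injection terms; powR 0 a = 0 for a <> 0, which is the
   continuous extension of |e1|^(2a) e1 at the origin *)
Definition phi1 (R : realType) (n : nat) (p k3 : R) (e1 : 'rV[R]_n) : 'rV[R]_n :=
  k3 *: e1 + (sqnorm e1 `^ ((1 - p) / (3 * p - 2))) *: e1.

Definition phi2 (R : realType) (n : nat) (p k3 : R) (e1 : 'rV[R]_n) : 'rV[R]_n :=
  k3 ^+ 2 *: e1
  + ((2 * k3 * (2 * p - 1)) / (3 * p - 2) * sqnorm e1 `^ ((1 - p) / (3 * p - 2))) *: e1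
  + (p / (3 * p - 2) * sqnorm e1 `^ (2 * (1 - p) / (3 * p - 2))) *: e1.

Definition perturbed_solution (R : realType) (n : nat) (p k1 k2 k3 dbar : R)
    (e1 e2 : R -> 'rV[R]_n) : Prop :=
  exists d1 d2 : R -> 'rV[R]_n,
    (forall t : R, 0 <= t -> pnorm2 (d1 t) (d2 t) <= dbar) /\
    (forall t : R, 0 < t ->
       is_derive t 1 e1 (- k1 *: phi1 p k3 (e1 t) + e2 t + d1 t) /\
       is_derive t 1 e2 (- k2 *: phi2 p k3 (e1 t) + d2 t)).

Definition PFTS_perturbed (R : realType) (n : nat) (p k1 k2 k3 dbar : R) : Prop :=
  exists r : R, 0 < r /\
    forall e1 e2 : R -> 'rV[R]_n, perturbed_solution p k1 k2 k3 dbar e1 e2 ->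
      exists T : R, 0 <= T /\ forall t, T <= t -> pnorm2 (e1 t) (e2 t) <= r.

From HB Require Import structures.
From mathcomp Require Import all_boot all_order all_algebra.
From mathcomp Require Import all_classical all_reals all_analysis.
From mathcomp Require Import ring lra.
Import Order.TTheory GRing.Theory Num.Theory.
Import numFieldNormedType.Exports.
Local Open Scope ring_scope.

(* Componentwise, the linear part x' = - a1 x + y, y' = - a2 x of the system
   (a1 = k1 k3, a2 = k2 k3^2) has the quadratic Lyapunov function
   al x^2 - 2 x y + ga y^2, whose derivative along it is - 2 a2 x^2 - 2 y^2.
   The remaining terms of phi1 and phi2 carry the gains |e1|^(2b) with
   -1/2 < b < 0: either such a gain is small, or |e1| is so small that
   gain * |e1|^2 and gain^2 * |e1|^2 are bounded.  Either way these terms cost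
   a small multiple of the quadratic form plus a constant, and so does the
   perturbation, by Young's inequality.  Summing over the components gives
   V' <= - c V + K, so V eventually stays below 2 K / c. *)

Lemma peter_paul {R : realFieldType} (a b eta : R) : 0 < eta ->
  2 * a * b <= eta * a ^+ 2 + b ^+ 2 / eta.
Proof.
move=> eta_gt0.
have -> : eta * a ^+ 2 + b ^+ 2 / eta = 2 * a * b + (eta * a - b) ^+ 2 / eta.
  by field; rewrite gt_eqF.
by rewrite lerDl divr_ge0 ?sqr_ge0 ?ltW.
Qed.

Lemma mul_cross_le {R : realFieldType} (z x y a b N : R) : 0 <= z -> `|a| <= N -> `|b| <= N ->
  z * x * (a * x + b * y) <= N * (z * x ^+ 2 + z * `|x * y|).
Proof.
move=> z_ge0 aN bN.
have zx2_ge0 : 0 <= z * x ^+ 2 by rewrite mulr_ge0 ?sqr_ge0.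
have zxy_ge0 : 0 <= z * `|x * y| by rewrite mulr_ge0.
have ax : a * (z * x ^+ 2) <= N * (z * x ^+ 2).
  exact: le_trans (ler_wpM2r zx2_ge0 (ler_norm a)) (ler_wpM2r zx2_ge0 aN).
have bxy : b * (z * (x * y)) <= N * (z * `|x * y|).
  apply: le_trans (ler_norm _) _.
  by rewrite normrM (normrM z) (ger0_norm z_ge0) ler_wpM2r.
by move: ax bxy; rewrite expr2; lra.
Qed.

Lemma lt0_ler_powR {R : realType} (b x y : R) : b < 0 -> 0 < x -> x <= y -> y `^ b <= x `^ b.
Proof.
move=> b_lt0 x_gt0 xy; have y_gt0 := lt_le_trans x_gt0 xy.
have powRNN (u : R) : u `^ b = (u `^ (- b))^-1 by rewrite -powRN opprK.
rewrite !powRNN lef_pV2 ?posrE ?powR_gt0 //.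
by apply: ge0_ler_powR; rewrite ?nnegrE; lra.
Qed.

Section UltimateBound.
Context {R : realType}.

Lemma nonincreasing_of_deriv_le0 (f df : R -> R) (a : R) :
  (forall t : R, a < t -> is_derive t 1 f (df t)) -> (forall t, a < t -> df t <= 0) ->
  forall s t, a < s -> s <= t -> f t <= f s.
Proof.
move=> f_df df_le0 s t as_ st.
rewrite -subr_le0.
have [u] : exists2 u, u \in `[s, t] & f t - f s = df u * (t - s).
  apply: MVT_segment => // [u|].
    by rewrite in_itv /= => /andP[su _]; apply: f_df; lra.
  apply: derivable_within_continuous => u; rewrite in_itv /= => /andP[su _].
  by have [] := f_df u ltac:(lra).
rewrite in_itv /= => /andP[su _] ->.
by rewrite mulr_le0_ge0 ?subr_ge0 // df_le0 //; lra.
Qed.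

Lemma ultimate_bound_of_deriv_le (V dV : R -> R) (c K : R) : 0 < c -> 0 < K ->
  (forall t : R, 0 < t -> is_derive t 1 V (dV t)) ->
  (forall t, 0 < t -> dV t <= - c * V t + K) ->
  exists2 T, 0 <= T & forall t, T <= t -> V t <= 2 * K / c.
Proof.
move=> c_gt0 K_gt0 V_dV dV_le.
pose g t := expR (c * t) * (V t - K / c).
have g_dg (t : R) : 0 < t -> is_derive t 1 g (expR (c * t) * (c * V t - K + dV t)).
  move=> t_gt0.
  have d_ct : is_derive t 1 (fun u => c * u) c.
    by eapply is_derive_eq; [exact: is_deriveZ | rewrite /GRing.scale /= mulr1].
  have d_exp := is_derive1_comp (is_derive_expR (c * t)) d_ct.
  have d_shift : is_derive t 1 (fun u => V u - K / c) (dV t).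
    by eapply is_derive_eq; [exact: is_deriveB (V_dV t t_gt0) (is_derive_cst _ t 1)
                            | rewrite subr0].
  eapply is_derive_eq; first exact: is_deriveM d_exp d_shift.
  by rewrite /GRing.scale /=; field; rewrite gt_eqF.
have g_le (t : R) : 1 <= t -> g t <= `|g 1|.
  move=> t_ge1; apply: le_trans (ler_norm _).
  pose dg u := expR (c * u) * (c * V u - K + dV u).
  apply: (@nonincreasing_of_deriv_le0 g dg 0 g_dg) => // u u_gt0.
  apply: mulr_ge0_le0; first exact/ltW/expR_gt0.
  by have := dV_le u u_gt0; lra.
have g1K_ge0 : 0 <= `|g 1| / K by rewrite divr_ge0 ?normr_ge0 ?ltW.
exists (1 + `|g 1| / K) => [|t tT]; first lra.
have t_ge1 : 1 <= t by lra.
have grow : `|g 1| <= K / c * expR (c * t).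
  have g1_le : `|g 1| <= K / c * (c * t).
    have -> : K / c * (c * t) = t * K by field; rewrite gt_eqF.
    by rewrite -ler_pdivrMr //; lra.
  apply: (le_trans g1_le); rewrite ler_wpM2l ?divr_ge0 ?ltW //.
  by have := expR_ge1Dx (c * t); lra.
have := le_trans (g_le t t_ge1) grow; rewrite /g mulrC ler_pM2r ?expR_gt0 //.
have -> : 2 * K / c = K / c + K / c by field; rewrite gt_eqF.
lra.
Qed.

End UltimateBound.

Section QuadraticForm.
Context {R : realType}.
Variables al ga : R.

Definition qform (x y : R) : R := al * x ^+ 2 - 2 * (x * y) + ga * y ^+ 2.

Definition qform_dir (x y u v : R) : R := 2 * (al * x - y) * u + 2 * (ga * y - x) * v.

Lemma qform_lbound (lam x y : R) : 0 < al -> lam <= al / 2 -> lam <= ga - 2 / al ->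
  lam * (x ^+ 2 + y ^+ 2) <= qform x y.
Proof.
move=> al_gt0 lam_al lam_ga.
have := peter_paul x y (al / 2) (divr_gt0 al_gt0 (ltr0Sn _ 1)).
have -> : y ^+ 2 / (al / 2) = 2 / al * y ^+ 2 by field; rewrite gt_eqF.
have := ler_wpM2r (sqr_ge0 x) lam_al; have := ler_wpM2r (sqr_ge0 y) lam_ga.
rewrite /qform; lra.
Qed.

Lemma qform_ubound (x y : R) : 0 <= al -> 0 <= ga ->
  qform x y <= (al + ga + 2) * (x ^+ 2 + y ^+ 2).
Proof.
move=> al_ge0 ga_ge0; have := peter_paul (- x) y 1 ltr01.
have := mulr_ge0 al_ge0 (sqr_ge0 y); have := mulr_ge0 ga_ge0 (sqr_ge0 x).
have := sqr_ge0 x; have := sqr_ge0 y.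
rewrite sqrrN divr1 /qform; lra.
Qed.

Lemma is_derive_qform {f g : R -> R} {f' g' t : R} :
  is_derive t 1 f f' -> is_derive t 1 g g' ->
  is_derive t 1 (fun s => qform (f s) (g s)) (qform_dir (f t) (g t) f' g').
Proof.
move=> df dg.
have dq := is_deriveD (is_deriveB (is_deriveZ al (is_deriveX 2 df))
                                 (is_deriveZ 2 (is_deriveM df dg)))
                      (is_deriveZ ga (is_deriveX 2 dg)).
eapply is_derive_eq; first exact: dq.
by rewrite /qform_dir /GRing.scale /= !expr1; ring.
Qed.

Lemma qform_dir_young (eta x y d1 d2 : R) : 0 < eta ->
  qform_dir x y d1 d2 <=
  2 * eta * (x ^+ 2 + y ^+ 2) + (al ^+ 2 + ga ^+ 2 + 1) / eta * (d1 ^+ 2 + d2 ^+ 2).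
Proof.
move=> eta_gt0.
have := peter_paul x (al * d1) eta eta_gt0; have := peter_paul y (- d1) eta eta_gt0.
have := peter_paul x (- d2) eta eta_gt0; have := peter_paul y (ga * d2) eta eta_gt0.
have := mulr_ge0 (divr_ge0 (sqr_ge0 ga) (ltW eta_gt0)) (sqr_ge0 d1).
have := mulr_ge0 (divr_ge0 (sqr_ge0 al) (ltW eta_gt0)) (sqr_ge0 d2).
rewrite /qform_dir !exprMn !sqrrN !mulrA !(mulrAC _ _ eta^-1).
rewrite !(mulrDl _ _ eta^-1) !mulrDl !mulrDr !mul1r.
lra.
Qed.

End QuadraticForm.

Section LinearLyapunov.
Context {R : realType}.
Variables a1 a2 : R.
Hypotheses (a1_gt0 : 0 < a1) (a2_gt0 : 0 < a2).

(* The weights are chosen so that the cross terms cancel along the linear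
   dynamics x' = - a1 x + y, y' = - a2 x. *)
Definition lyap_al : R := 2 * a2 / a1.
Definition lyap_ga : R := 2 / a1 + a1 / a2.

Lemma lyap_al_gt0 : 0 < lyap_al.
Proof. by rewrite divr_gt0 ?mulr_gt0. Qed.

Lemma lyap_ga_gt0 : 0 < lyap_ga.
Proof. by rewrite addr_gt0 ?divr_gt0. Qed.

Lemma qform_dir_linear (x y : R) :
  qform_dir lyap_al lyap_ga x y (- a1 * x + y) (- a2 * x) = - 2 * a2 * x ^+ 2 - 2 * y ^+ 2.
Proof. by rewrite /qform_dir /lyap_al /lyap_ga; field; rewrite !gt_eqF. Qed.

Lemma lyap_coercive :
  exists2 lam, 0 < lam & forall x y, lam * (x ^+ 2 + y ^+ 2) <= qform lyap_al lyap_ga x y.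
Proof.
exists (Num.min (lyap_al / 2) (2 / a1)) => [|x y].
  by rewrite lt_min; apply/andP; split; apply: divr_gt0; rewrite ?lyap_al_gt0.
apply: qform_lbound; first exact: lyap_al_gt0.
  by rewrite ge_min lexx.
have -> : lyap_ga - 2 / lyap_al = 2 / a1.
  by rewrite /lyap_al /lyap_ga; field; rewrite !gt_eqF.
by rewrite ge_min lexx orbT.
Qed.

End LinearLyapunov.

Section SmallOrBounded.
Context {R : realType}.

Definition small_or_bounded (eps C z x : R) : Prop :=
  z <= eps \/ (z * x ^+ 2 <= C /\ z ^+ 2 * x ^+ 2 <= C).

Lemma small_or_bounded_le (eps C C' z x : R) : C <= C' ->
  small_or_bounded eps C z x -> small_or_bounded eps C' z x.
Proof. by move=> CC' [|[zx z2x]]; [left | right; split; apply: le_trans CC']. Qed.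

(* Split at rho = eps^(1/b): beyond rho, S^b <= eps; below rho, S^b S and
   S^(2b) S are at most their values rho^(1+b), rho^(1+2b) at rho, as 1 + 2b > 0. *)
Lemma powR_small_or_bounded {b eps : R} : b < 0 -> 0 < 1 + 2 * b -> 0 < eps ->
  exists2 C, 0 <= C & forall S x, x ^+ 2 <= S -> small_or_bounded eps C (S `^ b) x.
Proof.
move=> b_lt0 b_gt eps_gt0.
pose rho := eps `^ b^-1.
have rho_gt0 : 0 < rho by exact: powR_gt0.
exists (rho `^ (b + 1) + rho `^ (b + b + 1)) => [|S x xS].
  by rewrite addr_ge0 ?powR_ge0.
have S_ge0 : 0 <= S := le_trans (sqr_ge0 x) xS.
have [->|S_neq0] := eqVneq S 0; first by left; rewrite powR0 ?lt_eqF ?ltW.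
have S_gt0 : 0 < S by rewrite lt_def S_neq0.
have [rhoS|Srho] := lerP rho S.
  left; have -> : eps = rho `^ b by rewrite -powRrM mulVf ?lt_eqF // powRr1 ?ltW.
  exact: lt0_ler_powR.
have powS (r : R) : 0 < r -> S `^ r <= rho `^ r.
  by move=> r_gt0; apply: ge0_ler_powR; rewrite ?nnegrE ?ltW.
right; split.
- apply: le_trans (_ : S `^ (b + 1) <= _).
    by rewrite powRD ?S_neq0 ?implybT // powRr1 // ler_wpM2l ?powR_ge0.
  by apply: le_trans (powS _ _) _; [lra | rewrite lerDl powR_ge0].
- apply: le_trans (_ : S `^ (b + b + 1) <= _).
    rewrite !powRD ?S_neq0 ?implybT // powRr1 // -expr2.
    by rewrite ler_wpM2l ?exprn_ge0 ?powR_ge0.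
  by apply: le_trans (powS _ _) _; [lra | rewrite lerDr powR_ge0].
Qed.

Lemma small_or_bounded_cross_le (eps C z x y : R) :
  0 <= z -> 0 < eps -> 0 <= C -> small_or_bounded eps C z x ->
  z * x ^+ 2 + z * `|x * y| <= 2 * eps * (x ^+ 2 + y ^+ 2) + (C + C / eps).
Proof.
move=> z_ge0 eps_gt0 C_ge0 [z_le|[zx z2x]].
- have := peter_paul `|x| `|y| 1 ltr01.
  rewrite normrM !real_normK ?num_real // divr1 mul1r => xy_le.
  have := ler_wpM2r (sqr_ge0 x) z_le; have := ler_wpM2r (normr_ge0 (x * y)) z_le.
  have := mulr_ge0 (ltW eps_gt0) (sqr_ge0 x); have := mulr_ge0 (ltW eps_gt0) (sqr_ge0 y).
  have := divr_ge0 C_ge0 (ltW eps_gt0).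
  rewrite normrM; nra.
- have inv_eps_gt0 : 0 < eps^-1 by rewrite invr_gt0.
  have := peter_paul `|z * x| `|y| eps^-1 inv_eps_gt0.
  rewrite invrK !real_normK ?num_real // exprMn !normrM (ger0_norm z_ge0) => zxy_le.
  have := ler_wpM2r (ltW inv_eps_gt0) z2x.
  have := mulr_ge0 (ltW eps_gt0) (sqr_ge0 x); have := mulr_ge0 (ltW eps_gt0) (sqr_ge0 y).
  have := divr_ge0 C_ge0 (ltW eps_gt0); lra.
Qed.

End SmallOrBounded.

Definition nonlinear_gain {R : realType} (al ga k1 k2 c m : R) : R :=
  2 * (al * k1 + k1 + (1 + ga) * k2 * (c + m)).

Lemma nonlinear_gain_ge0 {R : realType} (al ga k1 k2 c m : R) :
  0 <= al -> 0 <= ga -> 0 <= k1 -> 0 <= k2 -> 0 <= c -> 0 <= m ->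
  0 <= nonlinear_gain al ga k1 k2 c m.
Proof. by move=> *; rewrite !(mulr_ge0, addr_ge0). Qed.

Lemma qform_dir_nonlinear_le {R : realType} (al ga k1 k2 c m s t x y : R) :
  0 <= al -> 0 <= ga -> 0 <= k1 -> 0 <= k2 -> 0 <= c -> 0 <= m -> 0 <= s -> 0 <= t ->
  qform_dir al ga x y (- k1 * (s * x)) (- k2 * (c * s * x + m * t * x)) <=
  nonlinear_gain al ga k1 k2 c m * (s * x ^+ 2 + s * `|x * y| + (t * x ^+ 2 + t * `|x * y|)).
Proof.
move=> al_ge0 ga_ge0 k1_ge0 k2_ge0 c_ge0 m_ge0 s_ge0 t_ge0.
set N := nonlinear_gain _ _ _ _ _ _.
have -> : qform_dir al ga x y (- k1 * (s * x)) (- k2 * (c * s * x + m * t * x)) =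
    s * x * ((- 2 * al * k1 + 2 * k2 * c) * x + (2 * k1 - 2 * ga * k2 * c) * y)
  + t * x * ((2 * k2 * m) * x + (- 2 * ga * k2 * m) * y).
  by rewrite /qform_dir; ring.
have := mulr_ge0 al_ge0 k1_ge0; have := mulr_ge0 k2_ge0 c_ge0.
have := mulr_ge0 (mulr_ge0 ga_ge0 k2_ge0) c_ge0; have := mulr_ge0 k2_ge0 m_ge0.
have := mulr_ge0 (mulr_ge0 ga_ge0 k2_ge0) m_ge0.
move=> gak2m_ge0 k2m_ge0 gak2c_ge0 k2c_ge0 alk1_ge0.
have norm_le (a : R) : - N <= a <= N -> `|a| <= N by rewrite ler_norml.
rewrite [N * _]mulrDr; apply: lerD; apply: mul_cross_le => //;
  by apply: norm_le; apply/andP; split; rewrite /N /nonlinear_gain; lra.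
Qed.

Lemma component_dissipation_le {R : realType} (k1 k2 k3 c m mu eps C x y s t d1 d2 : R) :
  0 < k1 -> 0 < k2 -> 0 < k3 -> 0 <= c -> 0 <= m ->
  let al := lyap_al (k1 * k3) (k2 * k3 ^+ 2) in
  let ga := lyap_ga (k1 * k3) (k2 * k3 ^+ 2) in
  let N := nonlinear_gain al ga k1 k2 c m in
  0 < mu -> mu <= k2 * k3 ^+ 2 -> mu <= 1 -> 0 < eps -> 8 * N * eps <= mu -> 0 <= C ->
  0 <= s -> 0 <= t -> small_or_bounded eps C s x -> small_or_bounded eps C t x ->
  qform_dir al ga x y (- k1 * (k3 * x + s * x) + y + d1)
                      (- k2 * (k3 ^+ 2 * x + c * s * x + m * t * x) + d2)
  <= - mu * (x ^+ 2 + y ^+ 2) + (al ^+ 2 + ga ^+ 2 + 1) / (mu / 4) * (d1 ^+ 2 + d2 ^+ 2)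
     + 2 * N * (C + C / eps).
Proof.
move=> k1_gt0 k2_gt0 k3_gt0 c_ge0 m_ge0 al ga N mu_gt0 mu_a2 mu_1 eps_gt0 N_eps C_ge0.
move=> s_ge0 t_ge0 s_sob t_sob.
set a1 := k1 * k3; set a2 := k2 * k3 ^+ 2.
have a1_gt0 : 0 < a1 by rewrite mulr_gt0.
have a2_gt0 : 0 < a2 by rewrite mulr_gt0 ?exprn_gt0.
have al_gt0 : 0 < al := lyap_al_gt0 _ _ a1_gt0 a2_gt0.
have ga_gt0 : 0 < ga := lyap_ga_gt0 _ _ a1_gt0 a2_gt0.
have -> : qform_dir al ga x y (- k1 * (k3 * x + s * x) + y + d1)
                              (- k2 * (k3 ^+ 2 * x + c * s * x + m * t * x) + d2) =
    qform_dir al ga x y (- a1 * x + y) (- a2 * x)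
  + qform_dir al ga x y (- k1 * (s * x)) (- k2 * (c * s * x + m * t * x))
  + qform_dir al ga x y d1 d2.
  by rewrite /qform_dir /a1 /a2; ring.
rewrite qform_dir_linear //.
(* The linear part yields - 2 mu (x^2 + y^2); the nonlinear terms and the
   perturbation may each use up mu / 2 of it. *)
have nl := qform_dir_nonlinear_le al ga k1 k2 c m s t x y (ltW al_gt0) (ltW ga_gt0)
  (ltW k1_gt0) (ltW k2_gt0) c_ge0 m_ge0 s_ge0 t_ge0.
have N_ge0 : 0 <= N by rewrite /N; apply: nonlinear_gain_ge0 => //; apply: ltW.
have := small_or_bounded_cross_le _ _ _ _ y s_ge0 eps_gt0 C_ge0 s_sob.
have := small_or_bounded_cross_le _ _ _ _ y t_ge0 eps_gt0 C_ge0 t_sob.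
move=> /(ler_wpM2l N_ge0) nl_t /(ler_wpM2l N_ge0) nl_s.
have pert := qform_dir_young al ga (mu / 4) x y d1 d2 (divr_gt0 mu_gt0 (ltr0Sn _ 3)).
have := ler_wpM2r (addr_ge0 (sqr_ge0 x) (sqr_ge0 y)) N_eps.
have := ler_wpM2r (sqr_ge0 x) mu_a2; have := ler_wpM2r (sqr_ge0 y) mu_1.
rewrite -/N in nl; lra.
Qed.

Lemma component_dissipation {R : realType} {k1 k2 k3 c m : R} :
  0 < k1 -> 0 < k2 -> 0 < k3 -> 0 <= c -> 0 <= m ->
  let al := lyap_al (k1 * k3) (k2 * k3 ^+ 2) in
  let ga := lyap_ga (k1 * k3) (k2 * k3 ^+ 2) in
  exists2 mu : R, 0 < mu & exists2 eps : R, 0 < eps & exists2 Kd : R, 0 <= Kd &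
  forall C : R, 0 <= C -> exists2 K : R, 0 <= K &
  forall x y s t d1 d2 : R, 0 <= s -> 0 <= t ->
    small_or_bounded eps C s x -> small_or_bounded eps C t x ->
    qform_dir al ga x y (- k1 * (k3 * x + s * x) + y + d1)
                        (- k2 * (k3 ^+ 2 * x + c * s * x + m * t * x) + d2)
    <= - mu * (x ^+ 2 + y ^+ 2) + Kd * (d1 ^+ 2 + d2 ^+ 2) + K.
Proof.
move=> k1_gt0 k2_gt0 k3_gt0 c_ge0 m_ge0 al ga.
have al_gt0 : 0 < al by apply: lyap_al_gt0; rewrite ?mulr_gt0 ?exprn_gt0.
have ga_gt0 : 0 < ga by apply: lyap_ga_gt0; rewrite ?mulr_gt0 ?exprn_gt0.
pose mu := Num.min (k2 * k3 ^+ 2) 1.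
have mu_gt0 : 0 < mu by rewrite lt_min ltr01 mulr_gt0 ?exprn_gt0.
pose N := nonlinear_gain al ga k1 k2 c m.
have N_ge0 : 0 <= N by apply: nonlinear_gain_ge0 => //; apply: ltW.
pose eps := mu / (8 * N + 1).
have eps_gt0 : 0 < eps by rewrite divr_gt0 //; lra.
have N_eps : 8 * N * eps <= mu.
  rewrite /eps mulrA ler_pdivrMr; last lra.
  by rewrite mulrC ler_wpM2l ?ltW //; lra.
exists mu => //; exists eps => //; exists ((al ^+ 2 + ga ^+ 2 + 1) / (mu / 4)).
  by rewrite divr_ge0 ?divr_ge0 ?ltW //; have := sqr_ge0 al; have := sqr_ge0 ga; lra.
move=> C C_ge0; exists (2 * N * (C + C / eps)).
  have := divr_ge0 C_ge0 (ltW eps_gt0); have := mulr_ge0 N_ge0 C_ge0.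
  have := mulr_ge0 N_ge0 (divr_ge0 C_ge0 (ltW eps_gt0)); lra.
move=> x y s t d1 d2; apply: component_dissipation_le => //.
- by rewrite ge_min lexx.
- by rewrite ge_min lexx orbT.
Qed.

Section Vectors.
Context {R : realType} {n : nat}.
Implicit Types e f : 'rV[R]_n.

Lemma sqnorm_ge0 (x : 'rV[R]_n) : 0 <= sqnorm x.
Proof. by apply: sumr_ge0 => i _; exact: sqr_ge0. Qed.

Lemma sqr_le_sqnorm (x : 'rV[R]_n) (i : 'I_n) : x ord0 i ^+ 2 <= sqnorm x.
Proof. by rewrite /sqnorm (bigD1 i) //= lerDl sumr_ge0 // => j _; exact: sqr_ge0. Qed.

Lemma sqr_pnorm2 (x y : 'rV[R]_n) : pnorm2 x y ^+ 2 = sqnorm x + sqnorm y.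
Proof. by rewrite /pnorm2 sqr_sqrtr // addr_ge0 ?sqnorm_ge0. Qed.

Lemma sum_sqr_pnorm2 (x y : 'rV[R]_n) :
  \sum_(i < n) (x ord0 i ^+ 2 + y ord0 i ^+ 2) = pnorm2 x y ^+ 2.
Proof. by rewrite sqr_pnorm2 big_split. Qed.

Definition lyapv (al ga : R) e f : R := \sum_(i < n) qform al ga (e ord0 i) (f ord0 i).

Lemma lyapv_ubound (al ga : R) e f : 0 <= al -> 0 <= ga ->
  lyapv al ga e f <= (al + ga + 2) * pnorm2 e f ^+ 2.
Proof.
move=> al_ge0 ga_ge0; rewrite -sum_sqr_pnorm2 mulr_sumr.
by apply: ler_sum => i _; exact: qform_ubound.
Qed.

Lemma lyapv_coercive (a1 a2 : R) : 0 < a1 -> 0 < a2 ->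
  exists2 lam, 0 < lam &
    forall e f, lam * pnorm2 e f ^+ 2 <= lyapv (lyap_al a1 a2) (lyap_ga a1 a2) e f.
Proof.
move=> a1_gt0 a2_gt0; have [lam lam_gt0 lam_le] := lyap_coercive _ _ a1_gt0 a2_gt0.
exists lam => // e f; rewrite -sum_sqr_pnorm2 mulr_sumr.
by apply: ler_sum => i _; exact: lam_le.
Qed.

Lemma is_derive_coord {e : R -> 'rV[R]_n} {e' : 'rV[R]_n} {t : R} (i : 'I_n) :
  is_derive t 1 e e' -> is_derive t 1 (fun s => e s ord0 i) (e' ord0 i).
Proof.
move=> [de <-]; apply: DeriveDef; first by move/derivable_mxP: de; apply.
by rewrite derive_mx // mxE.
Qed.

Lemma is_derive_lyapv (al ga : R) {e1 e2 : R -> 'rV[R]_n} {e1' e2' : 'rV[R]_n} {t : R} :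
  is_derive t 1 e1 e1' -> is_derive t 1 e2 e2' ->
  is_derive t 1 (fun s => lyapv al ga (e1 s) (e2 s))
    (\sum_(i < n) qform_dir al ga (e1 t ord0 i) (e2 t ord0 i) (e1' ord0 i) (e2' ord0 i)).
Proof.
move=> de1 de2.
have := is_derive_sum (fun i => is_derive_qform al ga
  (is_derive_coord i de1) (is_derive_coord i de2)).
by rewrite fct_sumE.
Qed.

End Vectors.

Lemma phi_exponents {R : realFieldType} {p : R} : 1 < p -> p < 2 ->
  [/\ (1 - p) / (3 * p - 2) < 0, 0 < 1 + 2 * ((1 - p) / (3 * p - 2)),
      2 * (1 - p) / (3 * p - 2) < 0 & 0 < 1 + 2 * (2 * (1 - p) / (3 * p - 2))].
Proof.
move=> p_gt1 p_lt2; have q_gt0 : 0 < 3 * p - 2 by lra.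
have -> : 1 + 2 * ((1 - p) / (3 * p - 2)) = p / (3 * p - 2) by field; rewrite gt_eqF.
have -> : 1 + 2 * (2 * (1 - p) / (3 * p - 2)) = (2 - p) / (3 * p - 2).
  by field; rewrite gt_eqF.
by split; first [apply: divr_gt0 | rewrite pmulr_llt0 ?invr_gt0]; lra.
Qed.

Lemma lyapv_dissipation {R : realType} (n : nat) (dbar : R) {p k1 k2 k3 : R} :
  1 < p -> p < 2 -> 0 < k1 -> 0 < k2 -> 0 < k3 ->
  let al := lyap_al (k1 * k3) (k2 * k3 ^+ 2) in
  let ga := lyap_ga (k1 * k3) (k2 * k3 ^+ 2) in
  exists2 c : R, 0 < c & exists2 K : R, 0 < K &
  forall e1 e2 d1 d2 : 'rV[R]_n, pnorm2 d1 d2 <= dbar ->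
    \sum_(i < n) qform_dir al ga (e1 ord0 i) (e2 ord0 i)
      ((- k1 *: phi1 p k3 e1 + e2 + d1) ord0 i) ((- k2 *: phi2 p k3 e1 + d2) ord0 i)
    <= - c * lyapv al ga e1 e2 + K.
Proof.
move=> p_gt1 p_lt2 k1_gt0 k2_gt0 k3_gt0 al ga.
have [ea_lt0 ea_gt eb_lt0 eb_gt] := phi_exponents p_gt1 p_lt2.
have c_ge0 : 0 <= 2 * k3 * (2 * p - 1) / (3 * p - 2).
  by rewrite divr_ge0 ?mulr_ge0 ?ltW //; lra.
have m_ge0 : 0 <= p / (3 * p - 2) by rewrite divr_ge0 ?ltW //; lra.
have [mu mu_gt0 [eps eps_gt0 [Kd Kd_ge0 dissip]]] :=
  component_dissipation k1_gt0 k2_gt0 k3_gt0 c_ge0 m_ge0.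
have [C1 C1_ge0 sob1] := powR_small_or_bounded ea_lt0 ea_gt eps_gt0.
have [C2 C2_ge0 sob2] := powR_small_or_bounded eb_lt0 eb_gt eps_gt0.
have [K K_ge0 {}dissip] := dissip _ (addr_ge0 C1_ge0 C2_ge0).
have al_gt0 : 0 < al by apply: lyap_al_gt0; rewrite ?mulr_gt0 ?exprn_gt0.
have ga_gt0 : 0 < ga by apply: lyap_ga_gt0; rewrite ?mulr_gt0 ?exprn_gt0.
have M_gt0 : 0 < al + ga + 2 by lra.
exists (mu / (al + ga + 2)); first by rewrite divr_gt0.
exists (Kd * dbar ^+ 2 + K * n%:R + 1).
  by have := mulr_ge0 Kd_ge0 (sqr_ge0 dbar); have := mulr_ge0 K_ge0 (ler0n _ n); lra.
move=> e1 e2 d1 d2 d_le.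
have sob (b C C' : R) i :
    (forall S x, x ^+ 2 <= S -> small_or_bounded eps C (S `^ b) x) -> C <= C' ->
    small_or_bounded eps C' (sqnorm e1 `^ b) (e1 ord0 i).
  by move=> sobC CC'; apply: small_or_bounded_le CC' (sobC _ _ (sqr_le_sqnorm _ _)).
apply: le_trans (_ : - mu * pnorm2 e1 e2 ^+ 2 + Kd * pnorm2 d1 d2 ^+ 2 + K * n%:R <= _).
  have -> : - mu * pnorm2 e1 e2 ^+ 2 + Kd * pnorm2 d1 d2 ^+ 2 + K * n%:R =
      \sum_(i < n) (- mu * (e1 ord0 i ^+ 2 + e2 ord0 i ^+ 2)
                    + Kd * (d1 ord0 i ^+ 2 + d2 ord0 i ^+ 2) + K).
    by rewrite !big_split /= -!mulr_sumr !sum_sqr_pnorm2 sumr_const card_ord mulr_natr.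
  apply: ler_sum => i _; rewrite /phi1 /phi2 !mxE.
  apply: dissip; rewrite ?powR_ge0 //.
    by apply: (sob _ C1); rewrite ?lerDl.
  by apply: (sob _ C2); rewrite ?lerDr.
have pnorm_d : pnorm2 d1 d2 ^+ 2 <= dbar ^+ 2.
  have pnorm_ge0 : 0 <= pnorm2 d1 d2 by exact: sqrtr_ge0.
  by rewrite ler_sqr ?nnegrE // (le_trans pnorm_ge0).
have := ler_wpM2l Kd_ge0 pnorm_d.
have := ler_wpM2l (ltW (divr_gt0 mu_gt0 M_gt0)) (lyapv_ubound al ga e1 e2 (ltW al_gt0) (ltW ga_gt0)).
have -> : mu / (al + ga + 2) * ((al + ga + 2) * pnorm2 e1 e2 ^+ 2) = mu * pnorm2 e1 e2 ^+ 2.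
  by field; rewrite gt_eqF.
lra.
Qed.

Theorem corollary1 (R : realType) (n : nat) (p k1 k2 k3 dbar : R)
    (Q P : 'M[R]_2) :
  (1 <= n)%N -> 1 < p -> p < 2 -> 0 < k3 -> 0 < k1 -> 0 < k2 -> 0 <= dbar ->
  let A := \matrix_(i < 2, j < 2)
             (if i == 0 then (if j == 0 then - k1 else 1)
              else (if j == 0 then - k2 else 0)) in
  hurwitz A ->
  posdef Q ->
  posdef P ->
  A^T *m P + P *m A = - Q ->
  let gamma1 := k3 * lambda_min Q / lambda_max P in
  gamma1 >= lambda_max P / lambda_min P ->
  PFTS_perturbed n p k1 k2 k3 dbar.
Proof.
(* The explicit Lyapunov function lyapv replaces the pair (P, Q) of the paper. *)
move=> _ p_gt1 p_lt2 k3_gt0 k1_gt0 k2_gt0 _ A _ _ _ _ gamma1 _.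
have [c c_gt0 [K K_gt0 dissip]] :=
  lyapv_dissipation n dbar p_gt1 p_lt2 k1_gt0 k2_gt0 k3_gt0.
have [lam lam_gt0 coercive] :=
  lyapv_coercive (n := n) _ _ (mulr_gt0 k1_gt0 k3_gt0) (mulr_gt0 k2_gt0 (exprn_gt0 2 k3_gt0)).
exists (Num.sqrt (2 * K / c / lam)); split; first by rewrite sqrtr_gt0 !divr_gt0 //; lra.
move=> e1 e2 [d1 [d2 [d_le de]]].
pose al := lyap_al (k1 * k3) (k2 * k3 ^+ 2); pose ga := lyap_ga (k1 * k3) (k2 * k3 ^+ 2).
pose dV t := \sum_(i < n) qform_dir al ga (e1 t ord0 i) (e2 t ord0 i)
  ((- k1 *: phi1 p k3 (e1 t) + e2 t + d1 t) ord0 i) ((- k2 *: phi2 p k3 (e1 t) + d2 t) ord0 i).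
have [T T_ge0 V_le] :
    exists2 T : R, 0 <= T & forall t, T <= t -> lyapv al ga (e1 t) (e2 t) <= 2 * K / c.
  apply: (@ultimate_bound_of_deriv_le _ _ dV _ _ c_gt0 K_gt0) => t t_gt0.
    by have [de1 de2] := de t t_gt0; exact: is_derive_lyapv de1 de2.
  exact: dissip (d_le t (ltW t_gt0)).
exists T; split => // t tT; apply: ler_wsqrtr.
rewrite -sqr_pnorm2 ler_pdivlMr // mulrC.
exact: le_trans (coercive _ _) (V_le t tT).
Qed.
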